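(* Let $(b_n)$ be real numbers with $0 \le b_n < \ln n$, $b_n = (1 - o(1)) \ln n$, and $\ln n - b_n \to \infty$ as $n \to \infty$. Then there exists a sequence $\varepsilon_n \to 0$ such that for all sufficiently large $n$, \[ \mathbb{P}(F_n^- \le b_n) \le (\ln n)^{d-1} \exp\!\left[-\exp\!\left\{(1+\varepsilon_n)\tfrac12(\ln n - b_n)\right\}\right]. \]
   Context: Fix an integer $d \ge 1$. Let $X^{(1)}, X^{(2)}, \dots$ be i.i.d. random vectors in $\mathbb{R}^d$ with independent Exponential$(1)$ coordinates. For $x,y \in \mathbb{R}^d$ write $x \prec y$ if $x_j<y_j$ for all $j$, $x \le y$ if $x_j \le y_j$ for all $j$, and $x_+ := \sum_j x_j$. The record-setting region at time $n$ is $\mathrm{RS}_n := \{x \in \mathbb{R}^d : 0 \le x,\ x \not\prec X^{(i)} \text{ for all } 1 \le i \le n\}$, and its frontier $F_n$ is the topological boundary of $\mathrm{RS}_n$ relative to $[0,\infty)^d$. Define $F_n^- := \min\{x_+ : x \in F_n\}$. *)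

From HB Require Import structures.
From mathcomp Require Import all_boot all_order all_algebra.
From mathcomp Require Import all_classical all_reals all_analysis.
Set Implicit Arguments. Unset Strict Implicit. Unset Printing Implicit Defensive.
Import Order.TTheory GRing.Theory Num.Theory.
Import numFieldNormedType.Exports.
Local Open Scope classical_set_scope.
Local Open Scope ring_scope.

Section RecordFrontier.
Variable R : realType.
Variable d : nat.

Definition orthant : set 'rV[R]_d := [set x | forall j, 0 <= x ord0 j].

Definition strict_dom (x y : 'rV[R]_d) : Prop := forall j, x ord0 j < y ord0 j.

(* record-setting region RS_n for the observations Xs 0, ..., Xs (n-1)
   (i.e. X^(1), ..., X^(n) in the paper's 1-based indexing) *)
Definition RS (Xs : nat -> 'rV[R]_d) (n : nat) : set 'rV[R]_d :=
  [set x | orthant x /\ forall i, (i < n)%N -> ~ strict_dom x (Xs i)].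

(* boundary of A relative to the subspace Q = [0,oo)^d:
   cl_Q(A) \cap cl_Q(Q \ A), with cl_Q(B) = closure B \cap Q *)
Definition rel_boundary (Q A : set 'rV[R]_d) : set 'rV[R]_d :=
  Q `&` closure (Q `&` A) `&` closure (Q `\` A).

Definition frontier (Xs : nat -> 'rV[R]_d) (n : nat) : set 'rV[R]_d :=
  rel_boundary orthant (RS Xs n).

Definition coord_sum (x : 'rV[R]_d) : R := \sum_(j < d) x ord0 j.

(* F_n^- = min { x_+ : x in F_n } (written as an infimum; the minimum
   is attained since F_n is compact and nonempty for n >= 1 a.s.) *)
Definition Fminus (Xs : nat -> 'rV[R]_d) (n : nat) : R :=
  inf [set coord_sum x | x in frontier Xs n].

End RecordFrontier.

(* the random vector X^(i+1) at outcome w *)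
Definition rvec (R : realType) (T : Type) (d : nat)
  (X : nat -> 'I_d -> T -> R) (i : nat) (w : T) : 'rV[R]_d :=
  \row_(j < d) X i j w.

Definition mutually_independent (R : realType) (dT : measure_display)
  (T : measurableType dT) (P : probability T R) (d : nat)
  (X : nat -> 'I_d -> T -> R) : Prop :=
  forall (s : seq (nat * 'I_d)) (B : nat -> 'I_d -> set R),
    uniq s -> (forall i j, measurable (B i j)) ->
    P (\big[setI/setT]_(k <- s) (X k.1 k.2 @^-1` B k.1 k.2)) =
    (\prod_(k <- s) P (X k.1 k.2 @^-1` B k.1 k.2))%E.

From HB Require Import structures.
From mathcomp Require Import all_boot all_order all_algebra.
From mathcomp Require Import all_classical all_reals all_analysis.
From mathcomp Require Import ring lra.
Set Implicit Arguments. Unset Strict Implicit. Unset Printing Implicit Defensive.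
Import Order.TTheory GRing.Theory Num.Theory.
Import numFieldNormedType.Exports.
Local Open Scope classical_set_scope.
Local Open Scope ring_scope.

(* If F_n^- <= c, some frontier point x has x_+ < c + 1, and no observation
   strictly dominates x.  Rounding the first d - 1 coordinates of x up to
   integers and enlarging the last one gives a grid point g >= x with
   g_+ <= c + d + 2, which no observation strictly dominates either.  For a
   fixed g the n observations independently avoid the orthant above g, each
   with probability 1 - exp(-g_+), so a union bound over the at most
   (c + 2)^(d-1) grid points gives
     P(F_n^- <= c) <= (c + 2)^(d-1) exp(-n exp(-(c + d + 2))),
   which for c = b_n and ln n - b_n large is far below the claimed bound, even
   with eps_n = 0.  The event {F_n^- <= c} is measurable because F_n^- is
   attained at a point whose coordinates are 0 or coordinates of observations. *)

Section measurable_sets.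
Context {R : realType} {dT : measure_display} {T : measurableType dT}.
Implicit Types f g : T -> R.

Lemma measurable_ler f g : measurable_fun setT f -> measurable_fun setT g ->
  measurable [set w | f w <= g w].
Proof.
move=> mf mg.
have := measurable_realfun.measurable_fun_ler mf mg measurableT (Y := [set true]) I.
by rewrite setTI; congr measurable; apply/seteqP; split => w.
Qed.

Lemma measurable_ltr f g : measurable_fun setT f -> measurable_fun setT g ->
  measurable [set w | f w < g w].
Proof.
move=> mf mg.
have := measurable_realfun.measurable_fun_ltr mf mg measurableT (Y := [set true]) I.
by rewrite setTI; congr measurable; apply/seteqP; split => w.
Qed.

Lemma measurable_forall {I : finType} (A : I -> set T) :
  (forall i, measurable (A i)) -> measurable [set w | forall i, A i w].
Proof.
move=> mA; rewrite (_ : [set w | _] = \bigcap_(i in [set: I]) A i).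
  by apply: fin_bigcap_measurable => //; exact: finite_finset.
by apply/seteqP; split => w /= Aw i //; exact: Aw.
Qed.

Lemma measurable_exists {I : finType} (A : I -> set T) :
  (forall i, measurable (A i)) -> measurable [set w | exists i, A i w].
Proof.
move=> mA; rewrite (_ : [set w | _] = \bigcup_(i in [set: I]) A i).
  by apply: fin_bigcup_measurable => //; exact: finite_finset.
by apply/seteqP; split => w /= [i Aw]; exists i.
Qed.

Lemma measurable_forall_ltn n (A : nat -> set T) :
  (forall i, measurable (A i)) -> measurable [set w | forall i, (i < n)%N -> A i w].
Proof. by move=> mA; exact: bigcap_measurableType. Qed.

Lemma measurable_exists_ltn n (A : nat -> set T) :
  (forall i, measurable (A i)) -> measurable [set w | exists2 i, (i < n)%N & A i w].
Proof. by move=> mA; exact: bigcup_measurable. Qed.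

Lemma le_measure_bigsetU (mu : {measure set T -> \bar R}) (I : finType) (C : pred I)
    (F : I -> set T) :
  (forall i, measurable (F i)) ->
  (mu (\big[setU/set0]_(i | C i) F i) <= \sum_(i | C i) mu (F i))%E.
Proof.
move=> mF; suff [] : measurable (\big[setU/set0]_(i | C i) F i) /\
  (mu (\big[setU/set0]_(i | C i) F i) <= \sum_(i | C i) mu (F i))%E by [].
apply: (big_ind2 (fun A y => measurable A /\ (mu A <= y)%E)) => //.
- by rewrite measure0.
- move=> A1 y1 A2 y2 [mA1 A1y] [mA2 A2y]; split; first exact: measurableU.
  exact: le_trans (measureU2 mu mA1 mA2) (leeD A1y A2y).
Qed.

End measurable_sets.

Section frontier_geometry.
Variables (R : realType) (d : nat).
Implicit Types (x y : 'rV[R]_d) (Xs : nat -> 'rV[R]_d).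
Local Notation orthant := (@orthant R d).

Definition weak_dom x y : Prop := forall j, x ord0 j <= y ord0 j.

Definition under_records Xs n x : Prop :=
  exists2 i, (i < n)%N & strict_dom 0 (Xs i) /\ weak_dom x (Xs i).

Lemma closure_approx (A : set 'rV[R]_d) x : closure A x ->
  forall e, 0 < e -> exists2 z, A z & forall j, `|x ord0 j - z ord0 j| < e.
Proof.
move=> Ax e e0; have [z [Az [_ xz]]] := Ax _ (nbhsx_ballx x e e0).
by exists z => // j; exact: xz.
Qed.

Lemma closed_weak_dom y : closed [set x | weak_dom x y].
Proof.
move=> x /closure_approx xy j; rewrite leNgt; apply/negP => yx.
have [z zy /(_ j)] := xy (x ord0 j - y ord0 j) ltac:(by rewrite subr_gt0).
have := zy j; have := ler_norm (x ord0 j - z ord0 j); lra.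
Qed.

Lemma closed_under_records Xs n : closed [set x | under_records Xs n x].
Proof.
rewrite (_ : [set x | _] = \bigcup_(i in [set i | (i < n)%N /\ strict_dom 0 (Xs i)])
  [set x | weak_dom x (Xs i)]).
  apply: closed_bigcup => [|i _]; last exact: closed_weak_dom.
  by apply: (sub_finite_set _ (finite_II n)) => i [].
by apply/seteqP; split => x [i]; [move=> ? []|move=> [? ?] ?]; exists i.
Qed.

Lemma closure_orthantI_RS Xs n : closure (orthant `&` RS Xs n) `<=` RS Xs n.
Proof.
move=> x /closure_approx xRS; split.
  move=> j; rewrite leNgt; apply/negP => x0.
  have [z [_ [/(_ j) z0 _]] /(_ j)] := xRS (- x ord0 j) ltac:(by rewrite oppr_gt0).
  rewrite distrC; have := ler_norm (z ord0 j - x ord0 j); lra.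
move=> i ilt xX.
pose e := \big[Order.min/1]_j (Xs i ord0 j - x ord0 j).
have e0 : 0 < e by apply: lt_bigmin => // j _; rewrite subr_gt0.
have [z [_ [_ zRS]] xz] := xRS e e0.
apply: (zRS i ilt) => j.
have := xz j; have := @bigmin_le _ _ _ 1 j (fun j => Xs i ord0 j - x ord0 j).
rewrite -/e distrC; have := ler_norm (z ord0 j - x ord0 j); lra.
Qed.

Lemma closure_orthantD_RS Xs n : closure (orthant `\` RS Xs n) `<=` under_records Xs n.
Proof.
apply: subset_trans (@closed_under_records Xs n); apply: closureS => y [y0 yRS].
have [i ilt yX] : exists2 i, (i < n)%N & strict_dom y (Xs i).
  apply: contrapT => noX; apply: yRS; split => // i ilt yX.
  by apply: noX; exists i.
exists i => //; split => j; last exact/ltW.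
by rewrite mxE; exact: le_lt_trans (y0 j) (yX j).
Qed.

Lemma under_records_closure Xs n x : orthant x -> under_records Xs n x ->
  closure (orthant `\` RS Xs n) x.
Proof.
move=> x0 [i ilt [X0 xX]] B /nbhs_ballP [e /= e0 eB].
pose y : 'rV[R]_d := \row_j Num.max 0 (x ord0 j - e / 2).
exists y; split.
  split=> [j|[_ yRS]]; first by rewrite mxE le_max lexx.
  apply: (yRS i ilt) => j; rewrite mxE gt_max; have := X0 j; rewrite mxE => ->.
  by have := xX j; lra.
apply: eB; split => // i0 j; rewrite (ord1 i0) !mxE.
change (`|x ord0 j - Num.max 0 (x ord0 j - e / 2)| < e).
have := x0 j; case: (lerP 0 (x ord0 j - e / 2)) => h hx.
  by rewrite ger0_norm; lra.
by rewrite subr0 ger0_norm //; lra.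
Qed.

Lemma frontierP Xs n x : frontier Xs n x <-> RS Xs n x /\ under_records Xs n x.
Proof.
split=> [[[_ xRS] xnRS]|[xRS xU]].
  by split; [exact: closure_orthantI_RS|exact: closure_orthantD_RS].
have x0 : orthant x by case: xRS.
by split; [split=> //; exact: subset_closure|exact: under_records_closure].
Qed.

End frontier_geometry.

Lemma frontier_nonempty (R : realType) (d : nat) (Xs : nat -> 'rV[R]_d.+1) n i :
  (i < n)%N -> strict_dom 0 (Xs i) -> exists x, frontier Xs n x.
Proof.
move=> ilt X0.
have [m /asboolP m0 mmax] := @arg_maxP _ _ _ (Ordinal ilt)
  (fun k : 'I_n => `[< strict_dom 0 (Xs k) >]) (fun k : 'I_n => Xs k ord0 ord0) (asboolT X0).
exists (Xs m); apply/frontierP; split; last by exists m => //; split => // j.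
split=> [j|k kn mk]; first by have := m0 j; rewrite mxE => /ltW.
have k0 : strict_dom 0 (Xs k) by move=> j; apply: lt_trans (mk j); have := m0 j; rewrite mxE.
have := mmax (Ordinal kn) (asboolT k0); have := mk ord0; rewrite /=; lra.
Qed.

Section candidate_points.
Variables (R : realType) (d : nat) (Xs : nat -> 'rV[R]_d) (n : nat).
Local Notation orthant := (@orthant R d).
Local Notation frontier := (frontier Xs n).

Lemma coord_sum_ge0 (x : 'rV[R]_d) : orthant x -> 0 <= coord_sum x.
Proof. by move=> x0; apply: sumr_ge0 => j _; exact: x0. Qed.

(* F_n^- is attained at a point each of whose coordinates is 0 or the
   corresponding coordinate of an observation; [phi] records the choices. *)
Definition obs_coord j (o : option 'I_n) : R :=
  if o is Some k then Xs k ord0 j else 0.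

Definition candidate (phi : {ffun 'I_d -> option 'I_n}) : 'rV[R]_d :=
  \row_j obs_coord j (phi j).

Lemma exists_obs_coord_below j (t : R) : 0 <= t ->
  exists o, [/\ 0 <= obs_coord j o, obs_coord j o <= t &
    forall k : 'I_n, Xs k ord0 j <= t -> Xs k ord0 j <= obs_coord j o].
Proof.
move=> t0; case: (pselect (exists k : 'I_n, 0 <= Xs k ord0 j <= t)) => [[k0 k0t]|none].
  have [m /andP[m0 mt] mmax] := @arg_maxP _ _ _ k0
    (fun k => 0 <= Xs k ord0 j <= t) (fun k => Xs k ord0 j) k0t.
  exists (Some m); split=> // k kt; case: (lerP 0 (Xs k ord0 j)) => [k_ge0|/ltW k_le0].
    by apply: mmax; rewrite k_ge0 kt.
  exact: le_trans k_le0 m0.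
exists None; split=> // k kt /=; rewrite leNgt; apply/negP => k0.
by apply: none; exists k; rewrite (ltW k0) kt.
Qed.

Lemma frontier_candidate_below x : frontier x ->
  exists phi, frontier (candidate phi) /\ weak_dom (candidate phi) x.
Proof.
move=> /frontierP[[x0 xRS] [i ilt [X0 xX]]].
have [f fP] := fin_all_exists (fun j => exists_obs_coord_below j (x0 j)).
have candE j : candidate [ffun j => f j] ord0 j = obs_coord j (f j).
  by rewrite mxE ffunE.
have candx : weak_dom (candidate [ffun j => f j]) x.
  by move=> j; rewrite candE; have [] := fP j.
exists [ffun j => f j]; split => //; apply/frontierP; split; last first.
  by exists i => //; split => // j; exact: le_trans (candx j) (xX j).
split=> [j|k kn cX]; first by rewrite candE; have [] := fP j.
apply: (xRS k kn) => j; rewrite ltNge; apply/negP => Xx.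
have [_ _ /(_ (Ordinal kn) Xx)] := fP j; have := cX j; rewrite candE /=; lra.
Qed.

Lemma Fminus_le_candidate phi : frontier (candidate phi) ->
  Fminus Xs n <= coord_sum (candidate phi).
Proof.
move=> Fphi; apply: ge_inf; last by exists (candidate phi).
exists 0 => _ [x /frontierP[[x0 _] _] <-]; exact: coord_sum_ge0.
Qed.

Lemma Fminus_attained : (exists x, frontier x) ->
  exists phi, frontier (candidate phi) /\ coord_sum (candidate phi) <= Fminus Xs n.
Proof.
move=> [x Fx]; have [phi0 [Fphi0 _]] := frontier_candidate_below Fx.
have [m /asboolP Fm mmin] := @arg_minP _ _ _ phi0
  (fun phi => `[< frontier (candidate phi) >]) (fun phi => coord_sum (candidate phi))
  (asboolT Fphi0).
exists m; split => //; apply: lb_le_inf; first by exists (coord_sum x), x.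
move=> _ [z Fz <-]; have [phi [Fphi phiz]] := frontier_candidate_below Fz.
apply: le_trans (mmin _ (asboolT Fphi)) _.
by apply: ler_sum => j _; exact: phiz.
Qed.

Lemma Fminus_empty : (forall x, ~ frontier x) -> Fminus Xs n = 0.
Proof.
move=> noF; rewrite /Fminus (_ : [set _ | x in _] = set0) ?inf0 //.
by apply/seteqP; split => // y [x Fx _]; exact: noF Fx.
Qed.

Lemma Fminus_leP c : Fminus Xs n <= c <->
  (exists phi, frontier (candidate phi) /\ coord_sum (candidate phi) <= c) \/
  ((forall phi, ~ frontier (candidate phi)) /\ 0 <= c).
Proof.
case: (pselect (exists x, frontier x)) => [Fne|noF].
  have [phi0 [Fphi0 _]] := frontier_candidate_below (projT2 (cid Fne)).
  split=> [Fc|[[phi [Fphi phic]]|[noC _]]]; last by case: (noC phi0).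
    have [phi [Fphi phiF]] := Fminus_attained Fne.
    by left; exists phi; split=> //; exact: le_trans Fc.
  exact: le_trans (Fminus_le_candidate Fphi) phic.
rewrite Fminus_empty; last by move=> x Fx; apply: noF; exists x.
split=> [c0|[[phi [Fphi _]]|[]//]]; last by case: noF; exists (candidate phi).
by right; split=> // phi Fphi; apply: noF; exists (candidate phi).
Qed.

End candidate_points.

Section event_measurability.
Context {R : realType} {dT : measure_display} {T : measurableType dT} {d : nat}.
Variable Y : T -> nat -> 'rV[R]_d.
Hypothesis mY : forall i j, measurable_fun setT (fun w => Y w i ord0 j).

Lemma measurable_frontier n (x : T -> 'rV[R]_d) :
  (forall j, measurable_fun setT (fun w => x w ord0 j)) ->
  measurable [set w | frontier (Y w) n (x w)].
Proof.
move=> mx; rewrite (_ : [set w | _] =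
  [set w | RS (Y w) n (x w) /\ under_records (Y w) n (x w)]); last first.
  by apply/seteqP; split => w /frontierP.
have m0 j : measurable_fun setT (fun _ : T => (0 : 'rV[R]_d) ord0 j) := measurable_cst _.
apply: measurableI; first apply: measurableI.
- by apply: measurable_forall => j; exact: measurable_ler.
- apply: measurable_forall_ltn => i; apply: measurableC.
  by apply: measurable_forall => j; exact: measurable_ltr.
- apply: measurable_exists_ltn => i; apply: measurableI.
  + by apply: measurable_forall => j; exact: measurable_ltr.
  + by apply: measurable_forall => j; exact: measurable_ler.
Qed.

Lemma measurable_candidate_coord n (phi : {ffun 'I_d -> option 'I_n}) j :
  measurable_fun setT (fun w => candidate (Y w) phi ord0 j).
Proof.
under eq_fun do rewrite mxE; rewrite /obs_coord.
by case: (phi j) => [k|]; [exact: mY|exact: measurable_cst].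
Qed.

Lemma measurable_Fminus_le n c : measurable [set w | Fminus (Y w) n <= c].
Proof.
have mF (phi : {ffun 'I_d -> option 'I_n}) :=
  measurable_frontier n (measurable_candidate_coord phi).
rewrite (_ : [set w | _] = [set w |
  (exists phi : {ffun 'I_d -> option 'I_n},
     frontier (Y w) n (candidate (Y w) phi) /\ coord_sum (candidate (Y w) phi) <= c)
  \/ ((forall phi : {ffun 'I_d -> option 'I_n}, ~ frontier (Y w) n (candidate (Y w) phi))
      /\ 0 <= c)]); last first.
  by apply/seteqP; split => w /Fminus_leP.
apply: measurableU.
  apply: measurable_exists => phi; apply: measurableI; first exact: mF.
  apply: measurable_ler; last exact: measurable_cst.
  by apply: measurable_sum => j; exact: measurable_candidate_coord.
apply: measurableI; first by apply: measurable_forall => phi; exact: measurableC (mF phi).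
by apply: measurable_ler; exact: measurable_cst.
Qed.

End event_measurability.

Section independent_exponentials.
Context {R : realType} {dT : measure_display} {T : measurableType dT}
  (P : probability T R) {d : nat} (X : nat -> 'I_d -> T -> R).
Hypothesis Xmeas : forall i j, measurable_fun setT (X i j).
Hypothesis Xexp : forall i j (A : set R), measurable A ->
  P (X i j @^-1` A) = exponential_prob (1 : R) A.
Hypothesis Xindep : mutually_independent P X.
Implicit Types (g : 'I_d -> R) (S : seq nat).

Lemma measurable_preimage i j (A : set R) : measurable A -> measurable (X i j @^-1` A).
Proof. by move=> mA; rewrite -[_ @^-1` _]setTI; exact: Xmeas. Qed.

Lemma prob_coord_gt i j t : 0 < t -> P (X i j @^-1` `]t, +oo[) = (expR (- t))%:E.
Proof.
move=> t0.
have -> : X i j @^-1` `]t, +oo[ = ~` (X i j @^-1` `]-oo, 0%R[ `|` X i j @^-1` `[0, t]).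
  apply/seteqP; split => w /=; rewrite !in_itv /= andbT.
    by move=> tX [|/andP[_ Xt]]; lra.
  move=> notX; rewrite ltNge; apply/negP => Xt; apply: notX.
  by case: (ltP (X i j w) 0) => X0; [left|right; rewrite Xt andbT].
rewrite probability_setC; last by apply: measurableU; exact: measurable_preimage.
have -> : P (X i j @^-1` `]-oo, 0%R[ `|` X i j @^-1` `[0, t]) =
    (P (X i j @^-1` `]-oo, 0%R[) + P (X i j @^-1` `[0%R, t]))%E.
  apply: measureU; [exact: measurable_preimage|exact: measurable_preimage|].
  by apply/seteqP; split => w //= []; rewrite !in_itv /= => X0 /andP[? _]; lra.
rewrite !Xexp // exponential_prob_itv0c //.
have -> : exponential_prob (1 : R) `]-oo, 0%R[ = 0%E.
  apply: integral0_eq => x /=; rewrite in_itv /= => x0.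
  by rewrite lt0_exponential_pdf.
by rewrite add0e fin_num_oppeB // addeA subee // add0e mulN1r.
Qed.

Definition above g i : set T := [set w | forall j, g j < X i j w].
Definition none_above g n : set T := [set w | forall i, (i < n)%N -> ~ above g i w].
Definition all_above g S : set T := [set w | forall i, i \in S -> above g i w].

Lemma measurable_above g i : measurable (above g i).
Proof.
by apply: measurable_forall => j; apply: measurable_ltr; [exact: measurable_cst|exact: Xmeas].
Qed.

Lemma measurable_none_above g n : measurable (none_above g n).
Proof.
by apply: measurable_forall_ltn => i; have := measurableC (measurable_above g i).
Qed.

Lemma measurable_all_above g S : measurable (all_above g S).
Proof.
rewrite (_ : all_above g S = \bigcap_(i in [set` S]) above g i) //.
by apply: bigcap_measurableType => i _; exact: measurable_above.
Qed.

Lemma prob_all_above g S : (forall j, 0 < g j) -> uniq S ->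
  P (all_above g S) = (expR (- \sum_j g j) ^+ size S)%:E.
Proof.
move=> g0 uS.
pose s := [seq (i, j) | i <- S, j <- enum 'I_d].
pose B (i : nat) j : set R := `]g j, +oo[%classic.
have us : uniq s by apply: allpairs_uniq => //; [exact: enum_uniq|move=> [? ?] [? ?]].
have := @Xindep s B us (fun i j => measurable_itv _).
rewrite -bigcap_seq (_ : \bigcap_(k in [set` s]) _ = all_above g S); last first.
  apply/seteqP; split => w /= sw.
    move=> i iS j; have := sw (i, j); rewrite /B /= in_itv /= andbT; apply.
    by apply/allpairsP; exists (i, j); rewrite mem_enum.
  move=> -[i j] /allpairsP[[i' j'] /= [iS _ [-> ->]]].
  by rewrite /B /= in_itv /= andbT; exact: sw.
move=> ->; rewrite big_allpairs.
under eq_bigr => i _ do under eq_bigr => j _ do rewrite /B prob_coord_gt //.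
rewrite (eq_bigr (fun _ => (expR (- \sum_j g j))%:E)); last first.
  by move=> i _; rewrite prodEFin big_enum /= -sumrN expR_sum.
by rewrite prodEFin big_const_seq count_predT iter_mulr_1.
Qed.

Lemma none_above_split g n S :
  none_above g n `&` all_above g S =
  (none_above g n.+1 `&` all_above g S) `|` (none_above g n `&` all_above g (n :: S)).
Proof.
apply/seteqP; split => w /=.
  move=> [none all]; case: (pselect (above g n w)) => An.
    by right; split => // i; rewrite inE => /orP[/eqP ->|]//; exact: all.
  by left; split => // i; rewrite ltnS leq_eqVlt => /orP[/eqP ->|]//; exact: none.
case=> [[none all]|[none all]]; split => //.
- by move=> i /ltnW; exact: none.
- by move=> i iS; apply: all; rewrite inE iS orbT.
Qed.

Lemma none_above_split_disjoint g n S :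
  (none_above g n.+1 `&` all_above g S) `&` (none_above g n `&` all_above g (n :: S)) = set0.
Proof.
apply/seteqP; split => w //= [[none _] [_ all]].
by apply: (none n (ltnSn n)); apply: all; rewrite mem_head.
Qed.

(* Independence only yields product formulas for intersections of events
   [g < X^(i)]; the complements are removed by induction on n, splitting on
   whether X^(n-1) lies above g. *)
Lemma prob_none_above_all_above g n S : (forall j, 0 < g j) -> uniq S ->
  (forall i, i \in S -> (n <= i)%N) ->
  P (none_above g n `&` all_above g S) =
  ((1 - expR (- \sum_j g j)) ^+ n * expR (- \sum_j g j) ^+ size S)%:E.
Proof.
move=> g0; set p := expR _; elim: n S => [|n IH] S uS Sn.
  rewrite (_ : none_above g 0 = setT) ?setTI ?prob_all_above ?mul1r //.
  by apply/seteqP; split => w // _ i.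
have nS : n \notin S by apply/negP => /Sn; rewrite ltnn.
have PB : P (none_above g n `&` all_above g (n :: S)) = ((1 - p) ^+ n * p ^+ (size S).+1)%:E.
  by apply: IH => [|i]; [rewrite /= nS uS|rewrite inE => /orP[/eqP ->|/Sn/ltnW]].
have := IH S uS (fun i iS => ltnW (Sn i iS)); rewrite none_above_split.
set A := none_above g n.+1 `&` _; set B := none_above g n `&` _.
have mA : measurable A.
  by apply: measurableI; [exact: measurable_none_above|exact: measurable_all_above].
have mB : measurable B.
  by apply: measurableI; [exact: measurable_none_above|exact: measurable_all_above].
have -> : P (A `|` B) = (P A + P B)%E.
  by apply: measureU => //; exact: none_above_split_disjoint.
rewrite PB => /(congr1 (fun e => e - ((1 - p) ^+ n * p ^+ (size S).+1)%:E)%E).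
by rewrite addeK // -EFinB => ->; congr EFin; rewrite !exprS; ring.
Qed.

Lemma prob_none_above_le g n : (forall j, 0 < g j) ->
  (P (none_above g n) <= (expR (- (n%:R * expR (- \sum_j g j))))%:E)%E.
Proof.
move=> g0; have := @prob_none_above_all_above g n [::] g0 isT (fun i => ltac:(by [])).
rewrite (_ : all_above g [::] = setT); last by apply/seteqP; split => w // _ i.
rewrite setIT => ->; rewrite expr0 mulr1 lee_fin.
set q := expR (- \sum_j g j).
have q1 : q <= 1 by rewrite /q expR_le1 oppr_le0; apply: sumr_ge0 => j _; exact: ltW.
have q0 : 0 <= q := expR_ge0 _.
rewrite -mulrN expRM_natl; apply: lerXn2r; rewrite ?nnegrE ?expR_ge0 //; first lra.
by have := expR_ge1Dx (- q); lra.
Qed.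

End independent_exponentials.

Section grid.
Variables (R : realType) (d : nat).
Implicit Types (c : R) (Xs : nat -> 'rV[R]_d.+1).

Definition grid_size c : nat := (Num.truncn (c + 1)).+1.

Definition grid_sum M (k : {ffun 'I_d -> 'I_M}) : R := \sum_i (k i).+1%:R.

Definition grid_point c (k : {ffun 'I_d -> 'I_(grid_size c)}) (j : 'I_d.+1) : R :=
  if unlift ord_max j is Some i then (k i).+1%:R
  else Num.max 1 (c + 1 + d%:R - grid_sum k).

Lemma grid_point_ge1 c (k : {ffun 'I_d -> 'I_(grid_size c)}) j : 1 <= grid_point k j.
Proof.
by rewrite /grid_point; case: (unlift ord_max j) => [i|]; rewrite ?ler1n ?le_max ?lexx.
Qed.

Lemma sum_ord_max (F : 'I_d.+1 -> R) :
  \sum_j F j = \sum_(i < d) F (lift ord_max i) + F ord_max.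
Proof.
rewrite big_ord_recr /=; congr (_ + _); apply: eq_bigr => i _; congr F.
by apply: val_inj; rewrite /= /bump leqNgt ltn_ord.
Qed.

Lemma grid_point_sum c (k : {ffun 'I_d -> 'I_(grid_size c)}) :
  grid_sum k <= c + 1 + d%:R -> \sum_j grid_point k j <= c + d%:R + 2.
Proof.
move=> k_small; rewrite sum_ord_max.
rewrite (eq_bigr (fun i => (k i).+1%:R)) => [|i _]; last by rewrite /grid_point liftK.
rewrite /grid_point unlift_none -/(grid_sum k).
by case: (leP 1 (c + 1 + d%:R - grid_sum k)) => _; lra.
Qed.

Lemma coord_le_sum (x : 'rV[R]_d.+1) j : orthant x -> x ord0 j <= coord_sum x.
Proof.
by move=> x0; rewrite /coord_sum (bigD1 j) //= lerDl; apply: sumr_ge0 => k _; exact: x0.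
Qed.

(* k_i + 1 exceeds the i-th coordinate of x, and the last coordinate of the grid
   point exceeds that of x because the other coordinates of x sum to more than
   grid_sum k - d. *)
Lemma grid_above_frontier Xs n c x : frontier Xs n x -> coord_sum x < c + 1 ->
  exists k : {ffun 'I_d -> 'I_(grid_size c)}, grid_sum k <= c + 1 + d%:R /\
    forall i, (i < n)%N -> ~ (forall j, grid_point k j < Xs i ord0 j).
Proof.
move=> /frontierP[[x0 xRS] _] xc.
have k_lt i : (Num.truncn (x ord0 (lift ord_max i)) < grid_size c)%N.
  by rewrite ltnS le_truncn // (le_trans (coord_le_sum _ x0) (ltW xc)).
pose k := [ffun i => Ordinal (k_lt i)].
have kE i : ((k i).+1%:R : R) = (Num.truncn (x ord0 (lift ord_max i))).+1%:R.
  by rewrite ffunE.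
have kx i : x ord0 (lift ord_max i) < (k i).+1%:R.
  by rewrite kE; have /andP[] := truncn_itv (x0 (lift ord_max i)).
have k_sum : grid_sum k <= \sum_(i < d) x ord0 (lift ord_max i) + d%:R.
  have -> : (d%:R : R) = \sum_(i < d) 1 by rewrite sumr_const card_ord.
  rewrite /grid_sum -big_split /=.
  apply: ler_sum => i _; rewrite kE mulrS.
  by have /andP[+ _] := truncn_itv (x0 (lift ord_max i)); lra.
have := sum_ord_max (fun j => x ord0 j); rewrite -/(coord_sum x) => xsum.
exists k; split; first by have := x0 ord_max; lra.
move=> i ilt kX; apply: (xRS i ilt) => j; apply: le_lt_trans (kX j); rewrite /grid_point.
case: (unliftP ord_max j) => [i' ->|->]; first exact/ltW.
by rewrite le_max; apply/orP; right; lra.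
Qed.

Lemma grid_above_Fminus Xs n c : 0 <= c -> Fminus Xs n <= c ->
  exists k : {ffun 'I_d -> 'I_(grid_size c)}, grid_sum k <= c + 1 + d%:R /\
    forall i, (i < n)%N -> ~ (forall j, grid_point k j < Xs i ord0 j).
Proof.
move=> c0 Fc; case: (pselect (exists x, frontier Xs n x)) => [[x0 Fx0]|noF].
  have : Fminus Xs n < c + 1 by lra.
  case/inf_lt; first by exists (coord_sum x0), x0.
  by move=> _ [x Fx <-]; exact: grid_above_frontier.
exists [ffun => ord0]; split.
  rewrite /grid_sum (eq_bigr (fun _ => 1)) => [|i _]; last by rewrite ffunE.
  by rewrite sumr_const card_ord; lra.
move=> i ilt above; apply: noF; apply: (frontier_nonempty ilt) => j.
by rewrite mxE; have := above j; have := @grid_point_ge1 c [ffun=> ord0] j; lra.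
Qed.

End grid.
Arguments grid_sum {R d M} k.

Section union_bound.
Context {R : realType} {dT : measure_display} {T : measurableType dT}
  (P : probability T R) (d : nat) (X : nat -> 'I_d.+1 -> T -> R).
Hypothesis Xmeas : forall i j, measurable_fun setT (X i j).
Hypothesis Xexp : forall i j (A : set R), measurable A ->
  P (X i j @^-1` A) = exponential_prob (1 : R) A.
Hypothesis Xindep : mutually_independent P X.

Lemma prob_Fminus_le n c : 0 <= c ->
  (P [set w | (Fminus (rvec X ^~ w) n <= c)%R] <=
   ((grid_size c)%:R ^+ d * expR (- (n%:R * expR (- (c + d%:R + 2)))))%:E)%E.
Proof.
move=> c0; pose small (k : {ffun 'I_d -> 'I_(grid_size c)}) := grid_sum k <= c + 1 + d%:R.
have mrvec i j : measurable_fun setT (fun w => rvec X i w ord0 j).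
  by under eq_fun do rewrite mxE; exact: Xmeas.
have cover : [set w | Fminus (rvec X ^~ w) n <= c] `<=`
    \big[setU/set0]_(k | small k) none_above X (grid_point k) n.
  move=> w /= /(grid_above_Fminus c0)[k [ksmall kX]].
  rewrite (bigD1 k) //=; left => i ilt Xk; apply: (kX i ilt) => j.
  by rewrite mxE; exact: Xk.
apply: le_trans (le_measure P _ _ cover) _.
- by rewrite inE; exact: measurable_Fminus_le.
- by rewrite inE; apply: bigsetU_measurable => k _; exact: measurable_none_above.
apply: le_trans (le_measure_bigsetU P small (fun k => measurable_none_above Xmeas _ n)) _.
set B := expR _; apply: (@le_trans _ _ (\sum_(k | small k) B%:E)%E).
  apply: lee_sum => k ksmall.
  have k_pos j : 0 < grid_point k j by apply: lt_le_trans ltr01 (grid_point_ge1 k j).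
  apply: le_trans (prob_none_above_le Xmeas Xexp Xindep n k_pos) _.
  rewrite lee_fin ler_expR lerN2 ler_wpM2l // ler_expR lerN2.
  exact: grid_point_sum.
rewrite sumEFin lee_fin; apply: (@le_trans _ _ (\sum_(k : {ffun 'I_d -> 'I_(grid_size c)}) B)).
  rewrite [X in _ <= X](bigID small) /= lerDl.
  by apply: sumr_ge0 => k _; exact: expR_ge0.
by rewrite sumr_const card_ffun !card_ord -[B *+ _]mulr_natr natrX mulrC.
Qed.

End union_bound.

Section final_estimate.
Variable R : realType.

Lemma pow2_double_exp_le (d : nat) (a : R) : 2 * d%:R + 6 <= a ->
  2 ^+ d * expR (- expR (a - d%:R - 2)) <= expR (- expR (2^-1 * a)).
Proof.
move=> ha; set E := expR (2^-1 * a).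
have splitE : expR (a - d%:R - 2) = E * expR (2^-1 * a - d%:R - 2).
  by rewrite -expRD; congr expR; lra.
have t2 : 2 <= expR (2^-1 * a - d%:R - 2).
  by have := expR_ge1Dx (2^-1 * a - d%:R - 2); lra.
have Ed : d%:R + 4 <= E by have := expR_ge1Dx (2^-1 * a); rewrite -/E; lra.
have pow2 : (2 : R) ^+ d <= expR d%:R.
  rewrite -[X in expR X]mulr1 expRM_natl; apply: lerXn2r; rewrite ?nnegrE ?expR_ge0 //.
  by have := expR_ge1Dx (1 : R); lra.
have Et : 2 * E <= E * expR (2^-1 * a - d%:R - 2).
  by rewrite [E * _]mulrC; apply: ler_wpM2r => //; exact: expR_ge0.
apply: le_trans (ler_wpM2r (expR_ge0 _) pow2) _.
by rewrite -expRD ler_expR splitE; lra.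
Qed.

Lemma grid_bound_le (d : nat) (m b : R) : 0 < m -> 0 <= b ->
  2 * d%:R + 6 <= ln m - b ->
  (grid_size b)%:R ^+ d * expR (- (m * expR (- (b + d%:R + 2)))) <=
  ln m ^+ d * expR (- expR (2^-1 * (ln m - b))).
Proof.
move=> m0 b0 gap; have d0 : (0 : R) <= d%:R := ler0n _ _.
have size_le : (grid_size b)%:R <= 2 * ln m.
  rewrite /grid_size -natr1; have := truncn_le (b + 1).
  by rewrite (_ : 0 <= b + 1) //; lra.
have -> : m * expR (- (b + d%:R + 2)) = expR ((ln m - b) - d%:R - 2).
  by rewrite -[X in X * _]lnK ?posrE // -expRD; congr expR; lra.
apply: (@le_trans _ _ ((2 * ln m) ^+ d * expR (- expR (ln m - b - d%:R - 2)))).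
  apply: ler_wpM2r; first exact: expR_ge0.
  by apply: lerXn2r; rewrite ?nnegrE //; lra.
rewrite exprMn [2 ^+ d * _]mulrC -mulrA; apply: ler_wpM2l.
  by apply: exprn_ge0; lra.
exact: pow2_double_exp_le.
Qed.

End final_estimate.

Theorem proposition3p2 (R : realType) (dT : measure_display)
  (T : measurableType dT) (P : probability T R) (d : nat) (hd : (1 <= d)%N)
  (X : nat -> 'I_d -> T -> R)
  (Xmeas : forall i j, measurable_fun setT (X i j))
  (Xexp : forall i j (A : set R), measurable A ->
            P (X i j @^-1` A) = exponential_prob (1 : R) A)
  (Xindep : mutually_independent P X)
  (b : nat -> R)
  (hb : \forall n \near \oo, 0 <= b n /\ b n < ln (n%:R : R))
  (hb1 : (fun n => b n / ln (n%:R : R)) @ \oo --> (1 : R))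
  (hb2 : (fun n => ln (n%:R : R) - b n) @ \oo --> +oo) :
  exists eps : nat -> R, eps @ \oo --> (0 : R) /\
    \forall n \near \oo,
      (P [set w | (Fminus (rvec X ^~ w) n <= b n)%R] <=
       ((ln (n%:R : R)) ^+ d.-1 *
        expR (- expR ((1 + eps n) * 2^-1 * (ln (n%:R : R) - b n))))%:E)%E.
Proof.
(* the bound holds with eps = 0 *)
case: d hd X Xmeas Xexp Xindep => [//|d] _ X Xmeas Xexp Xindep.
exists (fun=> 0); split; first exact: cvg_cst.
have gap : \forall n \near \oo, 2 * d%:R + 6 <= ln (n%:R : R) - b n.
  by move/cvgryPge : hb2; apply.
near=> n.
have [b0 b_lt] : 0 <= b n /\ b n < ln (n%:R : R) by near: n; exact: hb.
have n0 : (0 : R) < n%:R.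
  by rewrite ltNge; apply/negP => n_le0; move: b_lt; rewrite ln0 //; lra.
apply: le_trans (prob_Fminus_le Xmeas Xexp Xindep n b0) _.
rewrite lee_fin addr0 mul1r; apply: grid_bound_le => //.
by near: n; exact: gap.
Unshelve. all: by end_near.
Qed.
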